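(* Let $q\geq 3$ be odd. The function $h\colon(0,1]\to\mathbb{C}$, $h(x)=1/x$, satisfies $\mathcal{P}_q h=h$, i.e. it is a real analytic eigenfunction of the Perron–Frobenius operator $\mathcal{P}_q$ with eigenvalue $1$.
   Context: Let $q\geq 3$ be odd and $\lambda=2\cos(\pi/q)$. Elements of $\mathrm{PGL}_2(\mathbb{R})$ act on $\mathbb{R}\cup\{\infty\}$ by $\begin{bmatrix}a&b\\c&d\end{bmatrix}.x=(ax+b)/(cx+d)$. Put $s(x)=\sin(x\pi/q)/\sin(\pi/q)$, $g_k=\begin{bmatrix}s(k)&-s(k+1)\\-s(k-1)&s(k)\end{bmatrix}$, $Q=\begin{bmatrix}0&1\\1&0\end{bmatrix}$, $K=\{(q+1)/2,\dots,q-1\}$. For $g\in\mathrm{PGL}_2(\mathbb{R})$ and a function $f$, set $\tau(g)f(x)=|(g^{-1})'(x)|\,f(g^{-1}.x)$, where $(g^{-1})'$ is the derivative of $x\mapsto g^{-1}.x$. The Perron–Frobenius operator is $\mathcal{P}_q=\sum_{k\in K}\big(\tau(g_k)+\tau(Qg_k)\big)$ (it is the transfer operator of the generalized Farey map with respect to Lebesgue measure). *)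

From Stdlib Require Import Reals List Arith.
From Coquelicot Require Import Coquelicot.
Open Scope R_scope.

Record mat2 := Mat2 { ma : R; mb : R; mc : R; md : R }.

Definition mat_mul (g h : mat2) : mat2 :=
  Mat2 (ma g * ma h + mb g * mc h) (ma g * mb h + mb g * md h)
       (mc g * ma h + md g * mc h) (mc g * mb h + md g * md h).

Definition mat_det (g : mat2) : R := ma g * md g - mb g * mc g.

Definition mat_inv (g : mat2) : mat2 :=
  let D := mat_det g in
  Mat2 (md g / D) (- mb g / D) (- mc g / D) (ma g / D).

Definition act (g : mat2) (x : R) : R := (ma g * x + mb g) / (mc g * x + md g).

Definition tau (g : mat2) (f : R -> R) (x : R) : R :=
  Rabs (Derive (fun y => act (mat_inv g) y) x) * f (act (mat_inv g) x).

Definition s (q : nat) (x : R) : R := sin (x * PI / INR q) / sin (PI / INR q).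

Definition gk (q k : nat) : mat2 :=
  Mat2 (s q (INR k)) (- s q (INR k + 1)) (- s q (INR k - 1)) (s q (INR k)).

Definition Qm : mat2 := Mat2 0 1 1 0.

(* K = {(q+1)/2, ..., q-1} *)
Definition Kset (q : nat) : list nat := seq ((q + 1) / 2) ((q - 1) / 2).

Definition PF (q : nat) (f : R -> R) (x : R) : R :=
  fold_right (fun k acc => tau (gk q k) f x + tau (mat_mul Qm (gk q k)) f x + acc)
    0 (Kset q).

Definition h (x : R) : R := / x.

(* If [g^-1 = [[a,b],[c,d]]] has determinant [+-1], then
   [tau(g) h x = 1/((cx+d)(ax+b))].  The inverses of [g_k] and [Q g_k] have entries
   [s(k-1), s(k), s(k+1)], and [s(k)^2 - s(k+1) s(k-1) = 1] (from
   [sin a^2 - sin(a+b) sin(a-b) = sin b^2]) turns the two terms of index [k] into a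
   difference [phi_k - phi_(k+1)], so [P_q h] telescopes to [phi_m - phi_q] with
   [m = (q+1)/2].  The symmetry [s(q-r) = s(r)] gives [phi_m = 0], and [s(q) = 0]
   gives [phi_q = -1/x]. *)
From Stdlib Require Import Reals List Lra Lia.
From Coquelicot Require Import Coquelicot.
Open Scope R_scope.

Lemma Derive_act g x : mc g * x + md g <> 0 ->
  Derive (act g) x = mat_det g / (mc g * x + md g) ^ 2.
Proof.
  intro Hx. apply is_derive_unique. unfold act, mat_det. auto_derive; [exact Hx|].
  field. exact Hx.
Qed.

Lemma tau_h_unimodular g a b c d x :
  mat_inv g = Mat2 a b c d -> Rabs (a * d - b * c) = 1 ->
  c * x + d <> 0 -> a * x + b <> 0 ->
  tau g h x = / ((c * x + d) * (a * x + b)).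
Proof.
  intros Eg Hdet Hc Ha. unfold tau. rewrite Eg, Derive_act by exact Hc.
  unfold mat_det, act, h; cbn [ma mb mc md].
  rewrite Rabs_div, Hdet, <- RPow_abs, pow2_abs by (apply pow_nonzero; exact Hc).
  field. split; assumption.
Qed.

Definition phi (u v x : R) : R := (v / (u * x + v) - u / (v * x + u)) / x.

Lemma phi_diag u x : phi u u x = 0.
Proof. unfold phi, Rdiv. ring. Qed.

Lemma phi_zero_r u x : u <> 0 -> x <> 0 -> phi u 0 x = - / x.
Proof. intros Hu Hx. unfold phi. field. split; assumption. Qed.

Lemma inv_prod_sum_eq_phi_sub a b c x : b * b - c * a = 1 -> x <> 0 ->
  a * x + b <> 0 -> b * x + c <> 0 -> b * x + a <> 0 -> c * x + b <> 0 ->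
  / ((a * x + b) * (b * x + c)) + / ((b * x + a) * (c * x + b)) =
  phi a b x - phi b c x.
Proof.
  intros Hdet Hx H1 H2 H3 H4.
  assert (Hca : c * a = b * b - 1) by lra.
  unfold phi. field [Hca]. repeat split; assumption.
Qed.

Lemma fold_right_seq_telescope (t F : nat -> R) m n :
  (forall k, (m <= k < m + n)%nat -> t k = F k - F (S k)) ->
  fold_right (fun k acc => t k + acc) 0 (seq m n) = F m - F (m + n)%nat.
Proof.
  revert m. induction n as [|n IHn]; intros m Ht; simpl.
  - rewrite Nat.add_0_r. ring.
  - rewrite IHn, Ht by (try intros k Hk; try apply Ht; lia).
    replace (m + S n)%nat with (S m + n)%nat by lia. ring.
Qed.

Lemma Kset_odd j : Kset (2 * j + 1) = seq (j + 1) j.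
Proof.
  unfold Kset. f_equal.
  - replace (2 * j + 1 + 1)%nat with ((j + 1) * 2)%nat by lia. apply Nat.div_mul. lia.
  - replace (2 * j + 1 - 1)%nat with (j * 2)%nat by lia. apply Nat.div_mul. lia.
Qed.

Lemma sin_sqr_sub_sin_plus_mul_sin_minus a b :
  sin a * sin a - sin (a + b) * sin (a - b) = sin b * sin b.
Proof.
  rewrite sin_plus, sin_minus.
  pose proof (sin2_cos2 a). pose proof (sin2_cos2 b). unfold Rsqr in *. nra.
Qed.

Section SinRatio.

Variable q : nat.
Hypothesis hq : (2 <= q)%nat.

Let q_ge2 : 2 <= INR q.
Proof. replace 2 with (INR 2) by reflexivity. apply le_INR, hq. Qed.

Let scaled_le_PI r : r <= INR q -> r * PI / INR q <= PI.
Proof.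
  intro Hr. pose proof PI_RGT_0. apply Rmult_le_reg_r with (INR q); [lra|].
  unfold Rdiv. rewrite Rmult_assoc, Rinv_l by lra. nra.
Qed.

Let scaled_lt_PI r : r < INR q -> r * PI / INR q < PI.
Proof.
  intro Hr. pose proof PI_RGT_0. apply Rmult_lt_reg_r with (INR q); [lra|].
  unfold Rdiv. rewrite Rmult_assoc, Rinv_l by lra. nra.
Qed.

Let sin_PI_div_pos : 0 < sin (PI / INR q).
Proof.
  pose proof PI_RGT_0. replace (PI / INR q) with (1 * PI / INR q) by (unfold Rdiv; ring).
  apply sin_gt_0; [apply Rdiv_lt_0_compat | apply scaled_lt_PI]; lra.
Qed.

Lemma s_nonneg r : 0 <= r <= INR q -> 0 <= s q r.
Proof.
  intro Hr. pose proof PI_RGT_0. unfold s.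
  apply Rdiv_le_0_compat; [apply sin_ge_0 | exact sin_PI_div_pos].
  - apply Rdiv_le_0_compat; nra.
  - apply scaled_le_PI; lra.
Qed.

Lemma s_pos r : 0 < r < INR q -> 0 < s q r.
Proof.
  intro Hr. pose proof PI_RGT_0. unfold s.
  apply Rdiv_lt_0_compat; [apply sin_gt_0 | exact sin_PI_div_pos].
  - apply Rdiv_lt_0_compat; nra.
  - apply scaled_lt_PI; lra.
Qed.

Lemma s_q : s q (INR q) = 0.
Proof.
  unfold s. replace (INR q * PI / INR q) with PI by (field; lra).
  rewrite sin_PI. unfold Rdiv. ring.
Qed.

Lemma s_sym r : s q (INR q - r) = s q r.
Proof.
  unfold s. replace ((INR q - r) * PI / INR q) with (PI - r * PI / INR q) by (field; lra).
  rewrite sin_PI_x. reflexivity.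
Qed.

Lemma s_det r : s q r * s q r - s q (r + 1) * s q (r - 1) = 1.
Proof.
  unfold s.
  replace ((r + 1) * PI / INR q) with (r * PI / INR q + PI / INR q) by (field; lra).
  replace ((r - 1) * PI / INR q) with (r * PI / INR q - PI / INR q) by (field; lra).
  pose proof (sin_sqr_sub_sin_plus_mul_sin_minus (r * PI / INR q) (PI / INR q)) as Hsin.
  set (A := sin (r * PI / INR q)) in *. set (S := sin (PI / INR q)) in *.
  set (B := sin (r * PI / INR q + PI / INR q)) in *.
  set (C := sin (r * PI / INR q - PI / INR q)) in *.
  replace (A / S * (A / S) - B / S * (C / S)) with ((A * A - B * C) / (S * S)) by (field; lra).
  rewrite Hsin. field. lra.
Qed.

Lemma mat_inv_gk k :
  mat_inv (gk q k) = Mat2 (s q (INR k)) (s q (INR k + 1)) (s q (INR k - 1)) (s q (INR k)).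
Proof.
  assert (Hdet : mat_det (gk q k) = 1)
    by (unfold mat_det, gk; cbn [ma mb mc md]; pose proof (s_det (INR k)); lra).
  unfold mat_inv. rewrite Hdet. unfold gk; cbn [ma mb mc md]. f_equal; field.
Qed.

Lemma mat_inv_Qgk k :
  mat_inv (mat_mul Qm (gk q k)) =
  Mat2 (s q (INR k + 1)) (s q (INR k)) (s q (INR k)) (s q (INR k - 1)).
Proof.
  assert (Hdet : mat_det (mat_mul Qm (gk q k)) = -1)
    by (unfold mat_det, mat_mul, Qm, gk; cbn [ma mb mc md]; pose proof (s_det (INR k)); lra).
  unfold mat_inv. rewrite Hdet. unfold mat_mul, Qm, gk; cbn [ma mb mc md]. f_equal; field.
Qed.

Definition s_phi (x : R) (k : nat) : R := phi (s q (INR k - 1)) (s q (INR k)) x.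

Lemma tau_pair_telescopes x k : 0 < x -> (1 <= k < q)%nat ->
  tau (gk q k) h x + tau (mat_mul Qm (gk q k)) h x = s_phi x k - s_phi x (S k).
Proof.
  intros Hx Hk.
  assert (Hk1 : 1 <= INR k) by (apply (le_INR 1); lia).
  assert (Hkq : INR k + 1 <= INR q) by (rewrite <- S_INR; apply le_INR; lia).
  assert (Ha : 0 <= s q (INR k - 1)) by (apply s_nonneg; lra).
  assert (Hb : 0 < s q (INR k)) by (apply s_pos; lra).
  assert (Hc : 0 <= s q (INR k + 1)) by (apply s_nonneg; lra).
  pose proof (s_det (INR k)) as Hdet.
  rewrite (tau_h_unimodular _ _ _ _ _ x (mat_inv_gk k)) by
    (rewrite ?Rabs_pos_eq; lra || (apply Rgt_not_eq; nra)).
  rewrite (tau_h_unimodular _ _ _ _ _ x (mat_inv_Qgk k)) by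
    (rewrite ?Rabs_left; lra || (apply Rgt_not_eq; nra)).
  unfold s_phi. rewrite S_INR. replace (INR k + 1 - 1) with (INR k) by ring.
  apply inv_prod_sum_eq_phi_sub; try (apply Rgt_not_eq; nra); lra.
Qed.

Lemma s_phi_q x : 0 < x -> s_phi x q = - / x.
Proof.
  intro Hx. assert (Hs : 0 < s q (INR q - 1)) by (apply s_pos; lra).
  unfold s_phi. rewrite s_q, phi_zero_r by lra. reflexivity.
Qed.

Lemma s_phi_middle x j : q = (2 * j + 1)%nat -> s_phi x (j + 1) = 0.
Proof.
  intro Hq. unfold s_phi.
  replace (INR (j + 1) - 1) with (INR q - INR (j + 1))
    by (rewrite Hq, !plus_INR, mult_INR; simpl; ring).
  rewrite s_sym. apply phi_diag.
Qed.

End SinRatio.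

Theorem proposition2p6 (q : nat) (hq3 : (3 <= q)%nat) (hqodd : Nat.Odd q) :
  forall x : R, 0 < x <= 1 -> PF q h x = h x.
Proof.
  intros x [Hx _]. destruct hqodd as [j Hq].
  assert (hq : (2 <= q)%nat) by lia.
  unfold PF. rewrite Hq, Kset_odd, <- Hq.
  rewrite (fold_right_seq_telescope _ (s_phi q x))
    by (intros k Hk; apply tau_pair_telescopes; lia || assumption).
  replace (j + 1 + j)%nat with q by lia.
  rewrite (s_phi_middle _ hq x j Hq), (s_phi_q _ hq x Hx).
  unfold h. ring.
Qed.
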